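(* A morphism $(f,\varphi):(X_1,\kappa_1,A_1)\to(X_2,\kappa_2,A_2)$ of $\mathbf{Sys}(L)$ is a monomorphism in $\mathbf{Sys}(L)$ if and only if the map $f:X_1\to X_2$ is injective and the homomorphism $\varphi:A_2\to A_1$ is an epimorphism in $\mathbf{A}$ (i.e. $(f,\varphi)$ is a monomorphism in $\mathbf{Set}\times\mathbf{A}^{op}$).
   Context: Fix a variety $\mathbf{A}$ of algebras (full subcategory of the category of $\Omega$-algebras and homomorphisms closed under products, subalgebras and homomorphic images); standing assumptions of the paper: $\mathbf{A}$ has set-indexed coproducts and a free algebra over a singleton. Fix an $\mathbf{A}$-algebra $L$; $L^X$ is the power algebra (so $L^{\varnothing}$ is a one-element algebra). An affine system is $(X,\kappa,A)$ with $X$ a set, $A$ an algebra, $\kappa:A\to L^X$ a homomorphism; a morphism $(f,\varphi):(X_1,\kappa_1,A_1)\to(X_2,\kappa_2,A_2)$ is a map $f:X_1\to X_2$ with a homomorphism $\varphi:A_2\to A_1$ such that $\kappa_1(\varphi(a))(x)=\kappa_2(a)(f(x))$ for all $a\in A_2,x\in X_1$; composition $(g,\psi)\circ(f,\varphi)=(g\circ f,\varphi\circ\psi)$. This category is $\mathbf{Sys}(L)$. *)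

From Stdlib Require Fin.

Set Implicit Arguments.

Record Signature := {
  op : Type;
  arity : op -> nat
}.

Record Alg (S : Signature) := {
  carrier :> Type;
  ops : forall o : op S, (Fin.t (arity S o) -> carrier) -> carrier
}.
Arguments ops {S} a o args.

Record Hom (S : Signature) (A B : Alg S) := {
  hfun :> A -> B;
  hfun_ops : forall (o : op S) (args : Fin.t (arity S o) -> A),
      hfun (ops A o args) = ops B o (fun i => hfun (args i))
}.

Definition hom_comp (S : Signature) (A B C : Alg S) (g : Hom B C) (f : Hom A B)
  : Hom A C.
Proof.
  refine {| hfun := fun x => g (f x) |}.
  intros o args. rewrite (hfun_ops f), (hfun_ops g). reflexivity.
Defined.

Definition prod_alg (S : Signature) (I : Type) (F : I -> Alg S) : Alg S :=
  {| carrier := forall i, F i;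
     ops := fun o args i => ops (F i) o (fun k => args k i) |}.

Arguments Alg : clear implicits.
Definition op_closed (S : Signature) (A : Alg S) (P : A -> Prop) : Prop :=
  forall (o : op S) (args : Fin.t (arity S o) -> A),
    (forall k, P (args k)) -> P (ops A o args).

Definition sub_alg (S : Signature) (A : Alg S) (P : A -> Prop)
  (HP : op_closed A P) : Alg S :=
  {| carrier := { x : A | P x };
     ops := fun o args =>
       exist _ (ops A o (fun k => proj1_sig (args k)))
             (HP o _ (fun k => proj2_sig (args k))) |}.

Record Variety (S : Signature) := {
  inV :> Alg S -> Prop;
  V_prod : forall (I : Type) (F : I -> Alg S),
      (forall i, inV (F i)) -> inV (prod_alg F);
  V_sub : forall (A : Alg S) (P : A -> Prop) (HP : op_closed A P),
      inV A -> inV (sub_alg HP);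
  V_hom_image : forall (A B : Alg S) (h : Hom A B),
      inV A -> (forall b : B, exists a : A, h a = b) -> inV B
}.

Definition has_coproducts (S : Signature) (V : Variety S) : Prop :=
  forall (I : Type) (F : I -> Alg S), (forall i, V (F i)) ->
  exists (C : Alg S) (inj : forall i, Hom (F i) C),
    V C /\
    forall (B : Alg S), V B -> forall (g : forall i, Hom (F i) B),
      exists u : Hom C B,
        (forall i x, u (inj i x) = g i x) /\
        (forall u' : Hom C B, (forall i x, u' (inj i x) = g i x) ->
                              forall c, u' c = u c).

Definition has_free_singleton (S : Signature) (V : Variety S) : Prop :=
  exists (F : Alg S) (gen : F),
    V F /\
    forall (B : Alg S), V B -> forall b : B,
      exists u : Hom F B, u gen = b /\
        (forall u' : Hom F B, u' gen = b -> forall c, u' c = u c).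

Definition is_epi (S : Signature) (V : Variety S) (A B : Alg S) (phi : Hom A B)
  : Prop :=
  forall (C : Alg S), V C -> forall u v : Hom B C,
    (forall a, u (phi a) = v (phi a)) -> forall b, u b = v b.

Definition pow_alg (S : Signature) (L : Alg S) (X : Type) : Alg S :=
  prod_alg (fun _ : X => L).

Record System (S : Signature) (V : Variety S) (L : Alg S) := {
  sX : Type;
  sA : Alg S;
  sA_in : V sA;
  skappa : Hom sA (pow_alg L sX)
}.

Record SysMor (S : Signature) (V : Variety S) (L : Alg S)
  (T1 T2 : System V L) := {
  mf : sX T1 -> sX T2;
  mphi : Hom (sA T2) (sA T1);
  m_compat : forall (a : sA T2) (x : sX T1),
      skappa T1 (mphi a) x = skappa T2 a (mf x)
}.

Definition sysmor_comp (S : Signature) (V : Variety S) (L : Alg S)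
  (T1 T2 T3 : System V L) (g : SysMor T2 T3) (f : SysMor T1 T2)
  : SysMor T1 T3.
Proof.
  refine {| mf := fun x => mf g (mf f x);
            mphi := hom_comp (mphi f) (mphi g) |}.
  intros a x. simpl. rewrite (m_compat f), (m_compat g). reflexivity.
Defined.

Definition sysmor_eq (S : Signature) (V : Variety S) (L : Alg S)
  (T1 T2 : System V L) (f g : SysMor T1 T2) : Prop :=
  (forall x, mf f x = mf g x) /\ (forall a, mphi f a = mphi g a).

Definition sys_mono (S : Signature) (V : Variety S) (L : Alg S)
  (T1 T2 : System V L) (m : SysMor T1 T2) : Prop :=
  forall (T0 : System V L) (g h : SysMor T0 T1),
    sysmor_eq (sysmor_comp m g) (sysmor_comp m h) -> sysmor_eq g h.

(* A monomorphism [m] is tested against systems with at most one point.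
   A system with one point and algebra [L] has, as morphisms into [T1], exactly
   the evaluations of [skappa T1] at points of [T1], so cancellability of [m]
   forces [mf m] to be injective.  A system with no points imposes no
   compatibility condition, so its morphisms into [T1] are just homomorphisms
   out of [sA T1], and cancellability of [m] is then the epimorphism property
   of [mphi m]. *)
From Stdlib Require Import FunctionalExtensionality.
Set Implicit Arguments.

Definition const_hom (S : Signature) (L : Alg S) : Hom L (pow_alg L unit).
Proof.
  refine {| hfun := (fun (l : L) (_ : unit) => l) : L -> pow_alg L unit |}.
  reflexivity.
Defined.

Definition empty_hom (S : Signature) (L C : Alg S) : Hom C (pow_alg L Empty_set).
Proof.
  refine {| hfun := (fun _ (e : Empty_set) => match e return L with end)
                    : C -> pow_alg L Empty_set |}.
  intros o args. apply functional_extensionality_dep. intros [].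
Defined.

Definition eval_hom (S : Signature) (L A : Alg S) (X : Type)
  (k : Hom A (pow_alg L X)) (x : X) : Hom A L.
Proof.
  refine {| hfun := fun a => k a x |}.
  intros o args. rewrite (hfun_ops k). reflexivity.
Defined.

Section SysMono.

Variables (S : Signature) (V : Variety S) (L : Alg S).

Definition point_system (HL : V L) : System V L :=
  {| sX := unit; sA := L; sA_in := HL; skappa := const_hom L |}.

Definition empty_system {C : Alg S} (HC : V C) : System V L :=
  {| sX := Empty_set; sA := C; sA_in := HC; skappa := empty_hom L C |}.

Definition point_mor (HL : V L) (T : System V L) (x : sX T)
  : SysMor (point_system HL) T :=
  @Build_SysMor S V L (point_system HL) T (fun _ => x) (eval_hom (skappa T) x)
    (fun _ _ => eq_refl).

Definition empty_mor {C : Alg S} (HC : V C) (T : System V L) (u : Hom (sA T) C)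
  : SysMor (empty_system HC) T :=
  @Build_SysMor S V L (empty_system HC) T (fun e => match e with end) u
    (fun _ e => match e with end).

Variables (T1 T2 : System V L) (m : SysMor T1 T2).

Lemma sys_mono_mf_inj (HL : V L) :
  sys_mono m -> forall x y, mf m x = mf m y -> x = y.
Proof.
  intros Hm x y Hxy.
  assert (Hcomp : sysmor_eq (sysmor_comp m (point_mor HL T1 x))
                            (sysmor_comp m (point_mor HL T1 y))).
  { split; simpl.
    - intros _. exact Hxy.
    - intros a. rewrite !(m_compat m), Hxy. reflexivity. }
  exact (proj1 (Hm _ _ _ Hcomp) tt).
Qed.

Lemma sys_mono_mphi_epi : sys_mono m -> is_epi V (mphi m).
Proof.
  intros Hm C HC u v Huv.
  assert (Hcomp : sysmor_eq (sysmor_comp m (empty_mor HC T1 u))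
                            (sysmor_comp m (empty_mor HC T1 v))).
  { split; simpl.
    - intros [].
    - exact Huv. }
  exact (proj2 (Hm _ _ _ Hcomp)).
Qed.

Lemma mf_inj_mphi_epi_sys_mono :
  (forall x y, mf m x = mf m y -> x = y) -> is_epi V (mphi m) -> sys_mono m.
Proof.
  intros Hinj Hepi T0 g h [Hf Hphi]. split.
  - intros x. exact (Hinj _ _ (Hf x)).
  - exact (Hepi _ (sA_in T0) (mphi g) (mphi h) Hphi).
Qed.

End SysMono.

Theorem proposition7 (S : Signature) (V : Variety S)
  (Hcoprod : has_coproducts V) (Hfree : has_free_singleton V)
  (L : Alg S) (HL : V L)
  (T1 T2 : System V L) (m : SysMor T1 T2) :
  sys_mono m <->
  ((forall x y : sX T1, mf m x = mf m y -> x = y) /\ is_epi V (mphi m)).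
Proof.
  split.
  - intros Hm. split.
    + exact (sys_mono_mf_inj HL Hm).
    + exact (sys_mono_mphi_epi Hm).
  - intros [Hinj Hepi]. exact (mf_inj_mphi_epi_sys_mono Hinj Hepi).
Qed.
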